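(* The Lie algebra $T^*\mathfrak{su}(2)$ (of dimension 6) admits no $k$-symplectic structure for any $k\ge1$.
   Context: $\mathfrak{su}(2)$ is the Lie algebra of $2\times2$ skew-Hermitian traceless complex matrices. For a Lie algebra $\mathfrak{g}$, $T^*\mathfrak{g}=\mathfrak{g}\oplus\mathfrak{g}^*$ with bracket $[u+\alpha,v+\beta]=[u,v]+\mathrm{ad}_u^*\beta-\mathrm{ad}_v^*\alpha$, where $(\mathrm{ad}_u^*\alpha)(v)=-\alpha([u,v])$. A $k$-symplectic structure on a real Lie algebra $\mathfrak{g}$ of dimension $n(k+1)$ ($n,k\ge1$) is a pair consisting of a Lie subalgebra $\mathfrak{h}\subset\mathfrak{g}$ of dimension $nk$ and a family $(\theta_1,\dots,\theta_k)$ of skew-symmetric bilinear forms on $\mathfrak{g}$ such that: (i) $\bigcap_{i=1}^k\ker\theta_i=\{0\}$, where $\ker\theta_i=\{u\in\mathfrak{g}:\theta_i(u,v)=0\ \forall v\in\mathfrak{g}\}$; (ii) each $\theta_i$ is a 2-cocycle: $\theta_i([u,v],w)+\theta_i([v,w],u)+\theta_i([w,u],v)=0$ for all $u,v,w$; (iii) $\theta_i(u,v)=0$ for all $u,v\in\mathfrak{h}$ and all $i$. *)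

From HB Require Import structures.
From mathcomp Require Import all_boot all_order all_algebra.
From mathcomp Require Import complex.
From mathcomp Require Import reals.
Set Implicit Arguments. Unset Strict Implicit. Unset Printing Implicit Defensive.
Import Order.TTheory GRing.Theory Num.Theory.
Local Open Scope ring_scope.

Section Defs.
Variable R : realType.

(* ---------- su(2) ----------------------------------------------------------
   su(2) = { X in M_2(C) | X^* = -X, tr X = 0 }.  Every such X is uniquely
       [[ i a      , b + i c ],
        [ -b + i c , -i a    ]]      (a, b, c real),
   so we use the real linear chart x = (a,b,c) : 'rV_3 <-> su(2). *)
Definition su2_mx (x : 'rV[R]_3) : 'M[R[i]]_2 :=
  \matrix_(i < 2, j < 2)
    if (i == 0 :> nat) && (j == 0 :> nat) then Complex 0 (x 0 0)
    else if (i == 0 :> nat) then Complex (x 0 1) (x 0 2%:R)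
    else if (j == 0 :> nat) then Complex (- x 0 1) (x 0 2%:R)
    else Complex 0 (- x 0 0).

Definition su2_coord (X : 'M[R[i]]_2) : 'rV[R]_3 :=
  \row_(j < 3)
    if (j == 0 :> nat) then complex.Im (X 0 0)
    else if (j == 1 :> nat) then complex.Re (X 0 1)
    else complex.Im (X 0 1).

Definition su2_br (x y : 'rV[R]_3) : 'rV[R]_3 :=
  su2_coord (su2_mx x * su2_mx y - su2_mx y * su2_mx x).

(* ---------- T^* su(2) = su(2) (+) su(2)^* ----------------------------------
   A covector alpha in su(2)^* is represented by its coordinates in the dual
   basis of the chart basis e_0, e_1, e_2:  alpha(v) = sum_j alpha_j v_j. *)
Definition e3 (j : 'I_3) : 'rV[R]_3 := delta_mx 0 j.
Definition dual_pair (alpha v : 'rV[R]_3) : R := \sum_(j < 3) alpha 0 j * v 0 j.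

Definition coad (u alpha : 'rV[R]_3) : 'rV[R]_3 :=
  \row_(j < 3) (- dual_pair alpha (su2_br u (e3 j))).

(* elements of T^* su(2) are row_mx u alpha : 'rV_(3+3);
   [u+alpha, v+beta] = [u,v] + ad^*_u beta - ad^*_v alpha *)
Definition tsu2_br (x y : 'rV[R]_(3 + 3)) : 'rV[R]_(3 + 3) :=
  row_mx (su2_br (lsubmx x) (lsubmx y))
         (coad (lsubmx x) (rsubmx y) - coad (lsubmx y) (rsubmx x)).

End Defs.

(* The subalgebra h is the row space of
   the matrix H (so dim h = \rank H). *)
Definition skew_bilinear (R : realType) (m : nat) (f : 'rV[R]_m -> 'rV[R]_m -> R)
  : Prop :=
  (forall (a : R) (u v w : 'rV[R]_m), f (a *: u + v) w = a * f u w + f v w) /\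
  (forall (a : R) (u v w : 'rV[R]_m), f w (a *: u + v) = a * f w u + f w v) /\
  (forall u v : 'rV[R]_m, f u v = - f v u).

Definition is_k_symplectic (R : realType) (m : nat)
  (br : 'rV[R]_m -> 'rV[R]_m -> 'rV[R]_m) (n k : nat) (H : 'M[R]_m)
  (theta : 'I_k -> 'rV[R]_m -> 'rV[R]_m -> R) : Prop :=
  (0 < n)%N /\ (0 < k)%N /\ m = (n * (k + 1))%N /\ \rank H = (n * k)%N /\
  (forall u v : 'rV[R]_m, (u <= H)%MS -> (v <= H)%MS -> (br u v <= H)%MS) /\
  (forall i, skew_bilinear (theta i)) /\
  (forall u : 'rV[R]_m, (forall i v, theta i u v = 0) -> u = 0) /\
  (forall i (u v w : 'rV[R]_m),
      theta i (br u v) w + theta i (br v w) u + theta i (br w u) v = 0) /\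
  (forall i (u v : 'rV[R]_m), (u <= H)%MS -> (v <= H)%MS -> theta i u v = 0).
Arguments is_k_symplectic {R m} br n k H theta.

From HB Require Import structures.
From mathcomp Require Import all_boot all_order all_algebra.
From mathcomp Require Import complex.
From mathcomp Require Import reals.
From mathcomp Require Import ring lra zify.
Set Implicit Arguments. Unset Strict Implicit. Unset Printing Implicit Defensive.
Import Order.TTheory GRing.Theory Num.Theory.
Local Open Scope ring_scope.

(* In the chart of su(2) by R^3, T^*su(2) is the Euclidean Lie algebra so(3) ⋉ R^3
   with bracket [(u,a),(v,b)] = 2 (u × v, u × b - v × a).  A 2-cocycle theta vanishes
   on the abelian ideal R^3 and its mixed part theta((u,0),(0,w)) is an alternating form
   on R^3; hence (0,w) lies in the kernel of theta as soon as w is a null vector of that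
   mixed part, and nondegeneracy forbids a common null vector of the mixed parts of the
   theta_i.  For k = 1 there is one, because an alternating form in odd dimension is
   degenerate.  For k >= 2, dim h >= 4 forces h to contain some x and some y = (0,b) with
   x_u × b <> 0; isotropy of y and of [x,y] = (0, 2 x_u × b) then makes x_u a null vector
   of every mixed part. *)

Section BilinearForm.
Variables (R : comRingType) (n : nat).

Definition bilinear_form (b : 'rV[R]_n -> 'rV[R]_n -> R) : Prop :=
  (forall a u v w, b (a *: u + v) w = a * b u w + b v w) /\
  (forall a u v w, b w (a *: u + v) = a * b w u + b w v).

Definition alternating (b : 'rV[R]_n -> 'rV[R]_n -> R) : Prop :=
  forall u, b u u = 0.

Definition gram (b : 'rV[R]_n -> 'rV[R]_n -> R) : 'M[R]_n :=
  \matrix_(i, j) b 'e_i 'e_j.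

Definition dotmul (u v : 'rV[R]_n) : R := (u *m v^T) 0 0.

Lemma dotmulE u v : dotmul u v = \sum_j u 0 j * v 0 j.
Proof. by rewrite /dotmul mxE; apply: eq_bigr => j _; rewrite mxE. Qed.

Lemma dotmul0v v : dotmul 0 v = 0.
Proof. by rewrite /dotmul mul0mx mxE. Qed.

Variable b : 'rV[R]_n -> 'rV[R]_n -> R.
Hypothesis b_bilinear : bilinear_form b.

Lemma form0l w : b 0 w = 0.
Proof.
have := b_bilinear.1 1 0 0 w; rewrite scale1r addr0 mul1r -[LHS]add0r.
by move/addIr <-.
Qed.

Lemma form0r w : b w 0 = 0.
Proof.
have := b_bilinear.2 1 0 0 w; rewrite scale1r addr0 mul1r -[LHS]add0r.
by move/addIr <-.
Qed.

Lemma formDl u v w : b (u + v) w = b u w + b v w.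
Proof. by have := b_bilinear.1 1 u v w; rewrite scale1r mul1r. Qed.

Lemma formDr u v w : b w (u + v) = b w u + b w v.
Proof. by have := b_bilinear.2 1 u v w; rewrite scale1r mul1r. Qed.

Lemma formZl a u w : b (a *: u) w = a * b u w.
Proof. by have := b_bilinear.1 a u 0 w; rewrite !addr0 form0l addr0. Qed.

Lemma formZr a u w : b w (a *: u) = a * b w u.
Proof. by have := b_bilinear.2 a u 0 w; rewrite !addr0 form0r addr0. Qed.

Lemma formNr u w : b w (- u) = - b w u.
Proof. by rewrite -scaleN1r formZr mulN1r. Qed.

Lemma formE u v : b u v = dotmul (u *m gram b) v.
Proof.
have suml (I : finType) (F : I -> 'rV[R]_n) w : b (\sum_i F i) w = \sum_i b (F i) w.
  by apply: (big_morph (b^~ w)) => [x y|]; rewrite ?formDl ?form0l.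
have sumr (I : finType) (F : I -> 'rV[R]_n) w : b w (\sum_i F i) = \sum_i b w (F i).
  by apply: (big_morph (b w)) => [x y|]; rewrite ?formDr ?form0r.
rewrite {1}[u]row_sum_delta {1}[v]row_sum_delta suml dotmulE.
under eq_bigr do rewrite formZl sumr big_distrr.
rewrite exchange_big; apply: eq_bigr => j _.
rewrite !mxE big_distrl; apply: eq_bigr => i _.
by rewrite formZr !mxE /= mulrA mulrAC.
Qed.

Lemma alternating_skew : alternating b -> forall u v, b u v = - b v u.
Proof.
move=> b_alt u v; apply/eqP; rewrite -addr_eq0.
by have := b_alt (u + v); rewrite formDl !formDr !b_alt add0r addr0 => ->.
Qed.

End BilinearForm.

Lemma bilinear_form_comp (R : comRingType) (m n : nat)
    (f g : 'rV[R]_m -> 'rV[R]_n) (b : 'rV[R]_n -> 'rV[R]_n -> R) :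
  linear f -> linear g -> bilinear_form b ->
  bilinear_form (fun u v => b (f u) (g v)).
Proof.
move=> f_lin g_lin [b_linl b_linr].
by split=> a u v w; rewrite ?f_lin ?g_lin ?b_linl ?b_linr.
Qed.

Lemma skew_gram_alternating (R : numFieldType) (n : nat)
    (b : 'rV[R]_n -> 'rV[R]_n -> R) :
  bilinear_form b -> (gram b)^T = - gram b -> alternating b.
Proof.
move=> b_bilinear gram_tr u; apply/eqP; rewrite -eqNr (formE b_bilinear) /dotmul.
have M_tr : (u *m gram b *m u^T)^T = - (u *m gram b *m u^T).
  rewrite !trmx_mul trmxK gram_tr.
  by rewrite (mulNmx (gram b)); rewrite (mulmxN u) mulmxA.
move: M_tr => /(congr1 (fun A : 'M[R]_1 => A 0 0)); rewrite [LHS]mxE [RHS]mxE => M_skew.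
by rewrite {1}M_skew opprK.
Qed.

Lemma alternating_odd_degenerate (R : numFieldType) (n : nat)
    (b : 'rV[R]_n -> 'rV[R]_n -> R) :
  bilinear_form b -> alternating b -> odd n ->
  exists2 w, w != 0 & forall v, b w v = 0.
Proof.
move=> b_bilinear b_alt n_odd.
have gram_tr : (gram b)^T = - gram b.
  by apply/matrixP => i j; rewrite !mxE (alternating_skew b_bilinear b_alt).
have /det0P [w w_neq0 wG] : \det (gram b) == 0.
  have := det_tr (gram b).
  rewrite gram_tr -scaleN1r detZ -signr_odd n_odd expr1 mulN1r => /eqP.
  by rewrite eqNr.
by exists w => // v; rewrite (formE b_bilinear) wG dotmul0v.
Qed.

Lemma ord3P (j : 'I_3) : [\/ j = 0, j = 1 | j = 2].
Proof.
by case: j => [[|[|[|j]]] lt_j3]; [apply: Or31 | apply: Or32 | apply: Or33 | ];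
  try exact: val_inj.
Qed.

Lemma big_ord3 (V : nmodType) (F : 'I_3 -> V) : \sum_(j < 3) F j = F 0 + F 1 + F 2.
Proof.
rewrite !big_ord_recl big_ord0 addr0 addrA.
by congr (F _ + F _ + F _); apply: val_inj.
Qed.

Section CrossProduct.
Variable R : comRingType.
Implicit Types u v w x y : 'rV[R]_3.

Lemma row3P u v : u 0 0 = v 0 0 -> u 0 1 = v 0 1 -> u 0 2 = v 0 2 -> u = v.
Proof. by move=> e0 e1 e2; apply/rowP => j; case: (ord3P j) => ->. Qed.

Lemma dotmul3E u v : dotmul u v = u 0 0 * v 0 0 + u 0 1 * v 0 1 + u 0 2 * v 0 2.
Proof. by rewrite dotmulE big_ord3. Qed.

Definition cross u v : 'rV[R]_3 :=
  \row_(j < 3) if j == 0 then u 0 1 * v 0 2 - u 0 2 * v 0 1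
               else if j == 1 then u 0 2 * v 0 0 - u 0 0 * v 0 2
               else u 0 0 * v 0 1 - u 0 1 * v 0 0.

Lemma cross0v v : cross 0 v = 0.
Proof. by apply: row3P; rewrite !mxE /=; ring. Qed.

Lemma crossv0 u : cross u 0 = 0.
Proof. by apply: row3P; rewrite !mxE /=; ring. Qed.

Lemma crossvv u : cross u u = 0.
Proof. by apply: row3P; rewrite !mxE /=; ring. Qed.

Lemma crossC u v : cross u v = - cross v u.
Proof. by apply: row3P; rewrite !mxE /=; ring. Qed.

Lemma cross_e01 : cross 'e_0 'e_1 = 'e_2.
Proof. by apply: row3P; rewrite !mxE /=; ring. Qed.

Lemma cross_e12 : cross 'e_1 'e_2 = 'e_0.
Proof. by apply: row3P; rewrite !mxE /=; ring. Qed.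

Lemma cross_e20 : cross 'e_2 'e_0 = 'e_1.
Proof. by apply: row3P; rewrite !mxE /=; ring. Qed.

Lemma cross_null_eq0 u : (forall v, cross u v = 0) -> u = 0.
Proof.
move=> u_null; have /rowP u0 := u_null 'e_0; have /rowP u1 := u_null 'e_1.
move: (u0 1) (u0 2) (u1 2); rewrite !mxE /= !mulr1 !mulr0 !subr0 sub0r.
move=> u2_0 /eqP; rewrite oppr_eq0 => /eqP u1_0 u0_0.
by apply: row3P; rewrite mxE.
Qed.

Lemma cross_sqr_decomposition c x y :
  dotmul (cross x y) (cross x y) *: c =
  dotmul c (cross x y) *: cross x y + dotmul c x *: cross y (cross x y)
  - dotmul c y *: cross x (cross x y).
Proof. by apply: row3P; rewrite !dotmul3E !mxE /=; ring. Qed.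

End CrossProduct.

Lemma cross_eq0_parallel (R : fieldType) (u v : 'rV[R]_3) (c : 'I_3) :
  cross u v = 0 -> v 0 c != 0 -> u = (u 0 c / v 0 c) *: v.
Proof.
move=> /rowP uv0 vc_neq0.
have := uv0 0; have := uv0 1; have := uv0 2; rewrite !mxE /=.
move=> /subr0_eq e2 /subr0_eq e1 /subr0_eq e0.
have coord_prop j : u 0 j * v 0 c = u 0 c * v 0 j.
  by case: (ord3P j) => ->; case: (ord3P c) => -> //.
apply/rowP => j; rewrite mxE mulrAC -coord_prop mulfK //.
Qed.

Lemma dotmul_self_eq0 (R : realDomainType) n (u : 'rV[R]_n) :
  (dotmul u u == 0) = (u == 0).
Proof.
rewrite dotmulE psumr_eq0 => [|j _]; last by rewrite -expr2 sqr_ge0.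
apply/idP/eqP => [/allP u0 | ->]; last by apply/allP => j _ /=; rewrite mxE mulr0.
apply/rowP => j; have /implyP := u0 j (mem_index_enum j).
by rewrite mulf_eq0 orbb mxE => /(_ isT) /eqP.
Qed.

Lemma orthogonal_cross_eq0 (R : realDomainType) (c x y : 'rV[R]_3) :
  cross x y != 0 -> dotmul c x = 0 -> dotmul c y = 0 ->
  dotmul c (cross x y) = 0 -> c = 0.
Proof.
move=> xy_neq0 cx cy cxy.
have := cross_sqr_decomposition c x y; rewrite cx cy cxy !scale0r !addr0 subr0.
by move/eqP; rewrite scalemx_eq0 dotmul_self_eq0 (negPf xy_neq0) => /eqP.
Qed.

Section CotangentSu2.
Variable R : realType.
Implicit Types (u w : 'rV[R]_3) (x : 'rV[R]_(3 + 3)).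

Lemma su2_brE u u' : su2_br u u' = 2 *: cross u u'.
Proof.
apply: row3P; rewrite /su2_br /su2_coord !mxE /=.
all: rewrite !big_ord_recr !big_ord0 /= !mxE /= !add0r /=; ring.
Qed.

Lemma coadE u w : coad u w = 2 *: cross u w.
Proof.
apply: row3P; rewrite /coad /dual_pair !mxE /=.
all: rewrite big_ord3 !su2_brE !mxE /=; ring.
Qed.

Lemma tsu2_br_row u w u' w' :
  tsu2_br (row_mx u w) (row_mx u' w') =
  row_mx (2 *: cross u u') (2 *: (cross u w' - cross u' w)).
Proof. by rewrite /tsu2_br !row_mxKl !row_mxKr su2_brE !coadE scalerBr. Qed.

Lemma tsu2_br_vert x w :
  tsu2_br x (row_mx 0 w) = row_mx 0 (2 *: cross (lsubmx x) w).
Proof.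
by rewrite -[in LHS](hsubmxK x) tsu2_br_row crossv0 cross0v scaler0 subr0.
Qed.

End CotangentSu2.

Section Cocycle.
Variable R : realType.
Variable theta : 'rV[R]_(3 + 3) -> 'rV[R]_(3 + 3) -> R.
Hypothesis theta_skew : skew_bilinear theta.
Hypothesis theta_cocycle : forall x y z,
  theta (tsu2_br x y) z + theta (tsu2_br y z) x + theta (tsu2_br z x) y = 0.
Implicit Types (u w : 'rV[R]_3) (x : 'rV[R]_(3 + 3)).

Definition hv_block u w := theta (row_mx u 0) (row_mx 0 w).
Definition vv_block w w' := theta (row_mx 0 w) (row_mx 0 w').

Let theta_bilinear : bilinear_form theta.
Proof. by case: theta_skew => linl [linr _]; split. Qed.

Let thetaC x y : theta x y = - theta y x.
Proof. by case: theta_skew => _ []. Qed.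

Let row_mx0_linear : linear (fun u : 'rV[R]_3 => row_mx u (0 : 'rV[R]_3)).
Proof. by move=> a u u'; rewrite scale_row_mx add_row_mx scaler0 addr0. Qed.

Let row_0mx_linear : linear (fun w : 'rV[R]_3 => row_mx (0 : 'rV[R]_3) w).
Proof. by move=> a w w'; rewrite scale_row_mx add_row_mx scaler0 addr0. Qed.

Lemma hv_block_bilinear : bilinear_form hv_block.
Proof. exact: bilinear_form_comp row_mx0_linear row_0mx_linear theta_bilinear. Qed.

Lemma vv_block_bilinear : bilinear_form vv_block.
Proof. exact: bilinear_form_comp row_0mx_linear row_0mx_linear theta_bilinear. Qed.

Let hv_blockE u w : theta (row_mx u 0) (row_mx 0 w) = hv_block u w.
Proof. by []. Qed.

Let theta_vh u w : theta (row_mx 0 w) (row_mx u 0) = - hv_block u w.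
Proof. exact: thetaC. Qed.

Lemma hv_block_cocycle u u' w :
  hv_block (cross u u') w - hv_block u (cross u' w) + hv_block u' (cross u w) = 0.
Proof.
have := theta_cocycle (row_mx u 0) (row_mx u' 0) (row_mx 0 w).
rewrite !tsu2_br_row !crossv0 !cross0v subrr sub0r !subr0 !scaler0 scalerN -scaleNr.
rewrite !theta_vh hv_blockE (formZl hv_block_bilinear) !(formZr hv_block_bilinear).
lra.
Qed.

Let vv_blockE w w' : theta (row_mx 0 w) (row_mx 0 w') = vv_block w w'.
Proof. by []. Qed.

Lemma vv_block_cocycle u w w' : vv_block (cross u w) w' = vv_block (cross u w') w.
Proof.
have := theta_cocycle (row_mx u 0) (row_mx 0 w) (row_mx 0 w').
rewrite !tsu2_br_row !crossv0 !cross0v !subrr !sub0r !subr0 !scaler0 row_mx0.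
rewrite (form0l theta_bilinear) scalerN -scaleNr !vv_blockE.
rewrite !(formZl vv_block_bilinear); lra.
Qed.

Lemma vv_block_eq0 w w' : vv_block w w' = 0.
Proof.
have vv_cross w1 w2 : vv_block (cross w1 w2) w1 = 0.
  by rewrite -vv_block_cocycle crossvv (form0l vv_block_bilinear).
have vvC w1 w2 : vv_block w1 w2 = - vv_block w2 w1 by exact: thetaC.
have vv_diag w1 : vv_block w1 w1 = 0 by apply/eqP; rewrite -eqNr -vvC.
have gram0 : gram vv_block = 0.
  have := vv_cross 'e_0 'e_1; have := vv_cross 'e_1 'e_2; have := vv_cross 'e_2 'e_0.
  rewrite cross_e01 cross_e12 cross_e20 => v12 v01 v20.
  apply/matrixP => i j; rewrite !mxE.
  by case: (ord3P i) => ->; case: (ord3P j) => ->;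
    rewrite ?vv_diag ?v12 ?v01 ?v20 // vvC ?v12 ?v01 ?v20 oppr0.
by rewrite (formE vv_block_bilinear) gram0 mulmx0 dotmul0v.
Qed.

Lemma hv_block_alternating : alternating hv_block.
Proof.
have hv_sym u u' : hv_block (cross u u') u' + hv_block u' (cross u u') = 0.
  by have := hv_block_cocycle u u' u'; rewrite crossvv (form0r hv_block_bilinear) subr0.
have := hv_sym 'e_0 'e_1; have := hv_sym 'e_1 'e_2; have := hv_sym 'e_2 'e_0.
have := hv_block_cocycle 'e_0 'e_1 'e_2; have := hv_block_cocycle 'e_1 'e_2 'e_0.
have := hv_block_cocycle 'e_2 'e_0 'e_1.
rewrite [cross 'e_0 'e_2]crossC [cross 'e_1 'e_0]crossC [cross 'e_2 'e_1]crossC.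
rewrite cross_e01 cross_e12 cross_e20 !(formNr hv_block_bilinear) => d0 d1 d2 s1 s0 s2.
apply: (skew_gram_alternating hv_block_bilinear).
apply/matrixP => i j; rewrite !mxE.
by case: (ord3P i) => ->; case: (ord3P j) => ->; lra.
Qed.

Lemma theta_vert w x : theta (row_mx 0 w) x = hv_block w (lsubmx x).
Proof.
rewrite {1}(_ : x = row_mx (lsubmx x) 0 + row_mx 0 (rsubmx x)); last first.
  by rewrite add_row_mx addr0 add0r hsubmxK.
rewrite (formDr theta_bilinear) theta_vh vv_blockE vv_block_eq0 addr0.
by rewrite (alternating_skew hv_block_bilinear hv_block_alternating) opprK.
Qed.

Lemma hv_block_null x w :
  theta (row_mx 0 w) x = 0 -> theta (tsu2_br x (row_mx 0 w)) x = 0 ->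
  cross (lsubmx x) w != 0 -> forall v, hv_block (lsubmx x) v = 0.
Proof.
have hv_skew := alternating_skew hv_block_bilinear hv_block_alternating.
rewrite tsu2_br_vert !theta_vert (formZl hv_block_bilinear).
move=> hv_w /eqP; rewrite mulf_eq0 pnatr_eq0 /= => /eqP hv_cross xw_neq0 v.
suff xG0 : lsubmx x *m gram hv_block = 0.
  by rewrite (formE hv_block_bilinear) xG0 dotmul0v.
apply: (orthogonal_cross_eq0 xw_neq0); rewrite -(formE hv_block_bilinear).
- exact: hv_block_alternating.
- by rewrite hv_skew hv_w oppr0.
- by rewrite hv_skew hv_cross oppr0.
Qed.

End Cocycle.

Lemma rank_le3_of_cross_eq0 (R : fieldType) (H : 'M[R]_(3 + 3)) :
  (forall x w, (x <= H)%MS -> (row_mx 0 w <= H)%MS -> cross (lsubmx x) w = 0) ->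
  (\rank H <= 3)%N.
Proof.
move=> H_cross; rewrite leqNgt; apply/negP => rank_H.
pose V : 'M[R]_(3, 3 + 3) := row_mx 0 1%:M.
have sub_V (w : 'rV[R]_3) : (row_mx 0 w <= V)%MS.
  by apply/submxP; exists w; rewrite mul_mx_row mulmx0 mulmx1.
have rank_V : \rank V = 3 by rewrite rank_row_0mx mxrank1.
have /rowV0Pn [y y_HV y_neq0] : (H :&: V)%MS != 0.
  rewrite -mxrank_eq0 -lt0n.
  have := mxrank_sum_cap H V; have := rank_leq_col (H + V)%MS; rewrite rank_V; lia.
have [w y_eq] : exists w, y = row_mx 0 w.
  have /submxP [w ->] := submx_trans y_HV (capmxSr H V).
  by exists w; rewrite mul_mx_row mulmx0 mulmx1.
have wH : (row_mx 0 w <= H)%MS by rewrite -y_eq (submx_trans y_HV (capmxSl H V)).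
have /matrix0Pn [i [c wc_neq0]] : w != 0.
  by apply: contraNneq y_neq0 => w0; rewrite y_eq w0 row_mx0.
rewrite (ord1 i) in wc_neq0.
(* All horizontal parts of H are parallel to w, so H <= <(w,0)> + V, with equality by
   dimension; but then w × v = 0 for every v. *)
pose a := row_mx w (0 : 'rV[R]_3).
have H_aV : (H <= a + V)%MS.
  apply/row_subP => r; set x := row r H.
  have x_par := cross_eq0_parallel (H_cross x w (row_sub r H) wH) wc_neq0.
  rewrite -(hsubmxK x) x_par.
  have -> : row_mx ((lsubmx x 0 c / w 0 c) *: w) (rsubmx x) =
            (lsubmx x 0 c / w 0 c) *: a + row_mx 0 (rsubmx x).
    by rewrite scale_row_mx add_row_mx scaler0 addr0 add0r.
  by apply: addmx_sub_adds; [apply: scalemx_sub | apply: sub_V].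
have aV_H : (a + V <= H)%MS.
  rewrite -(mxrank_leqif_sup H_aV).2 eqn_leq mxrankS //=.
  have := (mxrank_adds_leqif a V).1; have := rank_leq_row a; rewrite rank_V; lia.
have w0 : w = 0.
  apply: cross_null_eq0 => v.
  have aH := submx_trans (addsmxSl a V) aV_H.
  have vH := submx_trans (sub_V v) (submx_trans (addsmxSr a V) aV_H).
  by have := H_cross a v aH vH; rewrite row_mxKl.
by move: wc_neq0; rewrite w0 mxE eqxx.
Qed.

Lemma hv_block_common_null (R : realType) (k : nat)
    (theta : 'I_k -> 'rV[R]_(3 + 3) -> 'rV[R]_(3 + 3) -> R) :
  (forall i, skew_bilinear (theta i)) ->
  (forall i x y z, theta i (tsu2_br x y) z + theta i (tsu2_br y z) x
                   + theta i (tsu2_br z x) y = 0) ->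
  (forall x, (forall i y, theta i x y = 0) -> x = 0) ->
  forall w, (forall i v, hv_block (theta i) w v = 0) -> w = 0.
Proof.
move=> theta_skew theta_cocycle theta_nondeg w w_null.
have /eqP : row_mx (0 : 'rV[R]_3) w = 0 by apply: theta_nondeg => i y; rewrite theta_vert.
by rewrite row_mx_eq0 => /andP [_ /eqP].
Qed.

Theorem mainTheorem13 :
  forall (R : realType) (n k : nat) (H : 'M[R]_(3 + 3))
         (theta : 'I_k -> 'rV[R]_(3 + 3) -> 'rV[R]_(3 + 3) -> R),
    ~ is_k_symplectic (@tsu2_br R) n k H theta.
Proof.
move=> R n k H theta [n_gt0 [k_gt0 [dim_g [rank_H [H_sub [skew [nondeg [cocycle iso]]]]]]]].
have null_eq0 := hv_block_common_null skew cocycle nondeg.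
have [k_gt1 | k_le1] := ltnP 1 k.
  suff : (\rank H <= 3)%N by rewrite rank_H; nia.
  apply: rank_le3_of_cross_eq0 => x w xH wH; apply/eqP; apply: contraT => xw_neq0.
  suff xL0 : lsubmx x = 0 by move: xw_neq0; rewrite xL0 cross0v eqxx.
  apply: null_eq0 => i.
  by apply: (hv_block_null (skew i) (cocycle i) _ _ xw_neq0); rewrite ?iso ?H_sub.
pose i0 : 'I_k := Ordinal k_gt0.
have [w w_neq0 w_null] := alternating_odd_degenerate
  (hv_block_bilinear (skew i0)) (hv_block_alternating (skew i0) (cocycle i0)) isT.
move: w_neq0; rewrite (null_eq0 w) ?eqxx // => i v.
by rewrite (_ : i = i0) //; apply: val_inj; move: (ltn_ord i); rewrite /=; lia.
Qed.
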